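(* Let $\mathcal{T}$ be a meager hereditary family, let $l$ be a positive integer and let $\varepsilon>0$. For every $\eta>0$ there exists $n_0$ such that the following holds for all $n\ge n_0$. Let $(G_1,\dots,G_l)$ be vertex-disjoint graphs with $G_i\in\mathcal{T}$ for every $i\in[l]$ such that $\mathcal{X}=(V(G_1),\dots,V(G_l))$ is an $\varepsilon$-balanced partition of $[n]$. Then for at least a $(1-\eta)$-fraction of all extensions $G$ of $(G_1,\dots,G_l)$, the partition $\mathcal{X}$ is the unique $(\mathcal{T},l)$-partition of $G$. (That is: $\mathcal{X}$ is the unique $(\mathcal{T},l)$-partition of $G$ for almost every extension $G$ of $(G_1,\dots,G_l)$.)
   Context: All graphs are finite and simple. A family is hereditary if closed under isomorphism and induced subgraphs. For $s,t\ge0$, $\mathcal{H}(s,t)$ is the family of graphs whose vertex set can be partitioned into $s$ independent sets and $t$ cliques (parts may be empty); $\chi_c(\mathcal{F})$ is the maximum $l$ with $\mathcal{H}(s,l-s)\subseteq\mathcal{F}$ for some $0\le s\le l$. A hereditary family is thin if $\chi_c\le1$, meager if thin and it does not contain some substar and does not contain some antisubstar (substar: subgraph of a star; antisubstar: complement of a substar). A $(\mathcal{T},l)$-partition of $G$ is a partition $(X_1,\dots,X_l)$ of $V(G)$ with $G[X_i]\in\mathcal{T}$ for all $i$. A partition $\mathcal{X}$ of an $n$-element set is $\varepsilon$-balanced if $\big||X|-n/|\mathcal{X}|\big|\le n^{1-\varepsilon}$ for all $X\in\mathcal{X}$. For vertex-disjoint graphs $(G_1,\dots,G_l)$, an extension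 is a graph $G$ with $V(G)=\bigcup_i V(G_i)$ such that each $G_i$ is an induced subgraph of $G$. *)

From Stdlib Require Import Reals.
From mathcomp Require Import all_boot.
Set Implicit Arguments. Unset Strict Implicit. Unset Printing Implicit Defensive.

Definition graph (n : nat) := {ffun 'I_n * 'I_n -> bool}.

Definition simple n (G : graph n) : bool :=
  [forall x, ~~ G (x, x)] && [forall x, forall y, G (x, y) == G (y, x)].

(* a graph_family of graphs: a predicate on graphs on 'I_n, for every n
   (only its values on simple graphs matter) *)
Definition graph_family := forall n : nat, pred (graph n).

Definition induced n m (G : graph n) (f : 'I_m -> 'I_n) : graph m :=
  [ffun e : 'I_m * 'I_m => G (f e.1, f e.2)].

(* induced subgraph G[A], with vertices relabelled by the enumeration of A *)
Definition sub n (G : graph n) (A : {set 'I_n}) : graph #|A| :=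
  induced G (@enum_val _ (mem A)).

(* hereditary = closed under isomorphism and induced subgraphs, i.e. under
   pulling back along injective maps *)
Definition hereditary (F : graph_family) : Prop :=
  forall n m (G : graph n) (f : 'I_m -> 'I_n),
    simple G -> injective f -> F n G -> F m (induced G f).

(* G in H(s,t): vertex set partitioned into s independent sets (classes < s)
   and t cliques (classes >= s); parts may be empty *)
Definition inH (s t : nat) n (G : graph n) : Prop :=
  exists f : 'I_n -> 'I_(s + t),
    forall x y, x != y -> f x = f y -> G (x, y) = (s <= f x).

Definition containsH (F : graph_family) (s t : nat) : Prop :=
  forall n (G : graph n), simple G -> inH s t G -> F n G.

(* chi_c(F) <= 1 : no l >= 2 and s <= l with H(s, l - s) ⊆ F *)
Definition thin (F : graph_family) : Prop :=
  forall s t, 2 <= s + t -> ~ containsH F s t.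

Definition substar n (G : graph n) : Prop :=
  exists v : 'I_n, forall x y, G (x, y) -> x = v \/ y = v.

Definition complement n (G : graph n) : graph n :=
  [ffun e : 'I_n * 'I_n => (e.1 != e.2) && ~~ G e].

Definition antisubstar n (G : graph n) : Prop := substar (complement G).

Definition meager (F : graph_family) : Prop :=
  thin F /\
  (exists n (G : graph n), simple G /\ substar G /\ ~~ F n G) /\
  (exists n (G : graph n), simple G /\ antisubstar G /\ ~~ F n G).

(* a partition of 'I_n into l labelled parts, encoded by a part-assignment *)
Definition part n l (p : {ffun 'I_n -> 'I_l}) (i : 'I_l) : {set 'I_n} :=
  [set x | p x == i].

Definition Fl_partition (F : graph_family) n l (G : graph n) (p : {ffun 'I_n -> 'I_l}) : bool :=
  [forall i, F _ (sub G (part p i))].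

(* p is the unique (F,l)-partition of G (uniqueness as a set partition,
   i.e. up to relabelling of the parts) *)
Definition unique_Fl_partition (F : graph_family) n l (G : graph n) (p : {ffun 'I_n -> 'I_l}) : bool :=
  Fl_partition F G p &&
  [forall q : {ffun 'I_n -> 'I_l}, Fl_partition F G q ==>
     [forall x, forall y, (p x == p y) == (q x == q y)]].

Definition balanced (eps : R) n l (p : {ffun 'I_n -> 'I_l}) : Prop :=
  forall i : 'I_l,
    Rle (Rabs (Rminus (INR #|part p i|) (Rdiv (INR n) (INR l))))
        (Rpower (INR n) (Rminus R1 eps)).

Definition extension n l (p : {ffun 'I_n -> 'I_l})
    (Gs : forall i : 'I_l, graph #|part p i|) (G : graph n) : bool :=
  simple G && [forall i, sub G (part p i) == Gs i].

(* Since T is meager, it misses some substar S and some antisubstar A.  Call w k-mixed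
   on H if w has at least k neighbours and k non-neighbours in H.  With k = max(|S|, |A|),
   a homogeneous set H together with a vertex w that is k-mixed on H induces a copy of S
   (H independent) or of A (H a clique), so no part of a (T,l)-partition contains such a
   configuration.

   In a uniformly random extension, the edges between w and an h-set H of another part
   are uniform, so w fails to be mixed on H with probability at most 2^-c once h is
   large, and these events are independent for stars with disjoint edge sets.  Union
   bounds then show that almost every extension satisfies: (a) for every h-set H and
   every linear-size set W inside a part avoiding H, some vertex of W is mixed on H;
   (b) every vertex is mixed on many sets of a fixed packing of every other part by
   disjoint homogeneous h-sets.

   Given (a) and Ramsey's theorem, each part of p meets exactly one part of q in a
   linear-size set and every other part of q in fewer than 2^(2h) vertices, so it lies
   in its matched part of q up to boundedly many vertices.  By (b) every vertex then
   lies in the part of q matched with its own part: q equals p up to relabelling. *)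

From Stdlib Require Import Reals Lra.
From mathcomp Require Import all_boot zify.
Set Implicit Arguments. Unset Strict Implicit. Unset Printing Implicit Defensive.

Lemma simple_irr n (G : graph n) x : simple G -> G (x, x) = false.
Proof. by case/andP=> /forallP /(_ x) /negbTE. Qed.

Lemma simple_sym n (G : graph n) x y : simple G -> G (x, y) = G (y, x).
Proof. by case/andP=> _ /forallP /(_ x) /forallP /(_ y) /eqP. Qed.

Lemma simple_sub n (G : graph n) (A : {set 'I_n}) : simple G -> simple (sub G A).
Proof.
move=> sG; apply/andP; split; apply/forallP=> x; rewrite ?ffunE ?simple_irr //.
by apply/forallP=> y; rewrite !ffunE /= simple_sym.
Qed.

Lemma hereditary_induced_sub (T : graph_family) n (G : graph n) (Y : {set 'I_n})
    m (g : 'I_m -> 'I_n) :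
  hereditary T -> simple G -> injective g -> (forall x, g x \in Y) ->
  T _ (sub G Y) -> T m (induced G g).
Proof.
move=> hT sG g_inj gY TY.
pose f x := enum_rank_in (gY x) (g x).
have fK x : enum_val (f x) = g x by rewrite /f enum_rankK_in.
have <- : induced (sub G Y) f = induced G g.
  by apply/ffunP=> -[x y]; rewrite !ffunE /= !fK.
apply: hT TY => //; first exact: simple_sub.
by move=> x y /(congr1 enum_val); rewrite !fK => /g_inj.
Qed.

Lemma leq_card_in_inj (T U : finType) (A : {set T}) (B : {set U}) (u0 : U) :
  #|A| <= #|B| -> exists2 f : T -> U, {in A &, injective f} & {in A, forall x, f x \in B}.
Proof.
rewrite !cardE => leAB.
have ltB z : z \in A -> index z (enum A) < size (enum B).
  by move=> zA; rewrite (leq_trans _ leAB) // index_mem mem_enum.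
exists (fun x => nth u0 (enum B) (index x (enum A))) => [x y xA yA | x xA].
  by move/eqP; rewrite nth_uniq ?enum_uniq ?ltB // => /eqP; apply: (index_inj x); rewrite mem_enum.
by have := mem_nth u0 (ltB x xA); rewrite mem_enum.
Qed.

Lemma card_set_sum (T : finType) (P : {set T}) (Q : pred T) :
  #|[set x in P | Q x]| = \sum_(x in P) Q x.
Proof.
rewrite -sum1_card big_mkcond [RHS]big_mkcond /=.
by apply: eq_bigr => x _; rewrite !inE; case: (x \in P); case: (Q x).
Qed.

Lemma all_enum (T : finType) (A : {set T}) (P : pred T) :
  all P (enum A) = [forall x in A, P x].
Proof. by apply/allP/forall_inP=> PA x; rewrite ?mem_enum => xA; apply: PA; rewrite ?mem_enum. Qed.

Lemma card_bigcup_le (T U : finType) (I : {set U}) (Y : U -> {set T}) :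
  #|\bigcup_(u in I) Y u| <= \sum_(u in I) #|Y u|.
Proof.
apply: (big_ind2 (fun (A : {set T}) m => #|A| <= m)) => // [|A1 m1 A2 m2 le1 le2].
  by rewrite cards0.
exact: leq_trans (leq_card_setU _ _) (leq_add le1 le2).
Qed.

Lemma union_bound (T U : finType) (X : {set T}) (Y : U -> {set T}) (I : {set U}) a b :
  X \subset \bigcup_(u in I) Y u -> {in I, forall u, #|Y u| * a <= b} ->
  #|X| * a <= #|I| * b.
Proof.
move=> XY Yb; apply: leq_trans (_ : (\sum_(u in I) #|Y u|) * a <= _).
  by rewrite leq_mul2r (leq_trans (subset_leq_card XY)) ?card_bigcup_le ?orbT.
by rewrite big_distrl /= -sum_nat_const; apply: leq_sum.
Qed.

Lemma sum_card_fibers n l (q : 'I_n -> 'I_l) (A : {set 'I_n}) :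
  \sum_(j < l) #|[set x in A | q x == j]| = #|A|.
Proof.
under eq_bigr => j _ do rewrite card_set_sum.
rewrite exchange_big /= -sum1_card; apply: eq_bigr => x _.
by rewrite (bigD1 (q x)) //= eqxx big1 // => j /negbTE; rewrite eq_sym => ->.
Qed.

Lemma trivIset_disjoint_member (T : finType) (F : {set {set T}}) (Z : {set T}) :
  trivIset F -> #|Z| < #|F| -> exists2 H, H \in F & [disjoint H & Z].
Proof.
move=> /trivIsetP trivF ltZF.
have [/exists_inP[H HF dHZ] | /exists_inP meetZ] := boolP [exists H in F, [disjoint H & Z]].
  by exists H.
pose f H : option T := [pick z in H :&: Z].
have f_in : {in F, forall H, exists2 z, z \in H :&: Z & f H = Some z}.
  move=> H HF; rewrite /f; case: pickP => [z zHZ | none]; first by exists z.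
  case: meetZ; exists H => //; rewrite -setI_eq0; apply/eqP/setP=> z.
  by rewrite in_set0; apply: none.
have f_inj : {in F &, injective f}.
  move=> H1 H2 H1F H2F; have [z1 z1H ->] := f_in H1 H1F; have [z2 z2H ->] := f_in H2 H2F.
  move=> [ez]; apply/eqP; apply: contraT => neH.
  move: z1H z2H; rewrite ez !inE => /andP[zH1 _] /andP[zH2 _].
  by rewrite (disjointFr (trivF _ _ H1F H2F neH) zH1) in zH2.
have : #|f @: F| <= #|Some @: Z|.
  apply: subset_leq_card; apply/subsetP=> _ /imsetP[H HF ->].
  by have [z zHZ ->] := f_in H HF; apply: imset_f; move: zHZ; rewrite inE => /andP[].
rewrite !card_in_imset //; last by move=> ? ? _ _ [].
by rewrite leqNgt ltZF.
Qed.

Lemma card_set_type (T : finType) : #|{: {set T}}| = 2 ^ #|T|.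
Proof.
rewrite -cardsT -card_powerset; apply: eq_card => A.
by rewrite powersetE subsetT inE.
Qed.

(** * Homogeneous sets and Ramsey's theorem *)

Definition monochrome n (G : graph n) (b : bool) (H : {set 'I_n}) : bool :=
  [forall x in H, forall y in H, (x != y) ==> (G (x, y) == b)].

Definition homogeneous n (G : graph n) (H : {set 'I_n}) : bool :=
  monochrome G true H || monochrome G false H.

Lemma monochromeP n (G : graph n) b (H : {set 'I_n}) :
  reflect {in H &, forall x y, x != y -> G (x, y) = b} (monochrome G b H).
Proof.
apply: (iffP forall_inP) => [mH x y xH yH xy | mH x xH].
  by move/forall_inP: (mH x xH) => /(_ y yH) /implyP /(_ xy) /eqP.
by apply/forall_inP=> y yH; apply/implyP=> xy; rewrite (mH x y).
Qed.

Lemma monochrome_setU1 n (G : graph n) b (H : {set 'I_n}) v : simple G ->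
  monochrome G b H -> {in H, forall y, G (v, y) = b} -> monochrome G b (v |: H).
Proof.
move=> sG /monochromeP mH vH; apply/monochromeP=> x y.
rewrite !inE => /orP[/eqP->|xH] /orP[/eqP->|yH]; rewrite ?eqxx // => xy.
- exact: vH.
- by rewrite simple_sym // vH.
- exact: mH.
Qed.

Lemma homogeneous_eq n (G G' : graph n) (H : {set 'I_n}) :
  {in H &, forall x y, G (x, y) = G' (x, y)} -> homogeneous G H = homogeneous G' H.
Proof.
move=> GG'; suff eq_mono b : monochrome G b H = monochrome G' b H by rewrite /homogeneous !eq_mono.
apply/monochromeP/monochromeP=> mH x y xH yH xy; first by rewrite -GG' ?mH.
by rewrite GG' ?mH.
Qed.

Lemma ramsey n (G : graph n) a b (A : {set 'I_n}) : simple G -> 2 ^ (a + b) <= #|A| ->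
  exists2 H : {set 'I_n}, H \subset A &
    (#|H| = a /\ monochrome G true H) \/ (#|H| = b /\ monochrome G false H).
Proof.
move=> sG; elim: a b A => [|a IHa] b A.
  by exists set0; rewrite ?sub0set // cards0; left; split=> //; apply/monochromeP=> x; rewrite inE.
elim: b A => [|b IHb] A.
  by exists set0; rewrite ?sub0set // cards0; right; split=> //; apply/monochromeP=> x; rewrite inE.
move=> bigA; have [v vA] : exists v, v \in A.
  by apply/set0Pn; apply: contraTneq bigA => ->; rewrite cards0 -ltnNge expn_gt0.
set N := (A :\ v) :&: [set y | G (v, y)]; set M := (A :\ v) :\: [set y | G (v, y)].
have cardA : #|A| = #|N| + #|M| + 1 by rewrite (cardsD1 v A) vA cardsID addn1.
have NA : N \subset A by apply/subsetP=> y; rewrite !inE => /andP[/andP[]].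
have MA : M \subset A by apply/subsetP=> y; rewrite !inE => /andP[_ /andP[]].
have add_v (C : {set 'I_n}) b' : C \subset A :\ v -> {in C, forall y, G (v, y) = b'} ->
    monochrome G b' C -> #|v |: C| = #|C|.+1 /\ monochrome G b' (v |: C).
  move=> CA vC mC; split; last exact: monochrome_setU1.
  have vC' : v \notin C by apply/negP=> /(subsetP CA); rewrite !inE eqxx.
  by rewrite cardsU1 vC'.
have [bigN|smallN] := leqP (2 ^ (a + b.+1)) #|N|.
  have [H HN [[cH mH]|cmH]] := IHa b.+1 N bigN.
    2: by exists H; [apply: subset_trans HN NA | right].
  have HA : H \subset A :\ v by apply: subset_trans HN (subsetIl _ _).
  have vH y : y \in H -> G (v, y) = true.
    by move/(subsetP HN); rewrite !inE => /andP[].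
  have [cvH mvH] := add_v H true HA vH mH.
  exists (v |: H); last by left; rewrite cvH cH.
  by rewrite subUset sub1set vA (subset_trans HA (subsetDl _ _)).
have bigM : 2 ^ (a.+1 + b) <= #|M|.
  move: bigA smallN; rewrite cardA !addSn !addnS !expnS; lia.
have [H HM [cmH|[cH mH]]] := IHb M bigM; first by exists H; [apply: subset_trans HM MA | left].
have HA : H \subset A :\ v by apply: subset_trans HM (subsetDl _ _).
have vH y : y \in H -> G (v, y) = false.
  by move/(subsetP HM); rewrite !inE => /andP[/negbTE].
have [cvH mvH] := add_v H false HA vH mH.
exists (v |: H); last by right; rewrite cvH cH.
by rewrite subUset sub1set vA (subset_trans HA (subsetDl _ _)).
Qed.

Lemma ramsey_homogeneous n (G : graph n) h (A : {set 'I_n}) : simple G -> 2 ^ (h + h) <= #|A| ->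
  exists H : {set 'I_n}, [/\ H \subset A, #|H| = h & homogeneous G H].
Proof.
move=> sG /(ramsey sG) [H HA [[cH mH] | [cH mH]]]; exists H; split=> //.
- by rewrite /homogeneous mH.
- by rewrite /homogeneous mH orbT.
Qed.

Lemma homogeneous_packing n (G : graph n) h (A : {set 'I_n}) : simple G -> 0 < h ->
  exists F : {set {set 'I_n}},
    [/\ {in F, forall H : {set 'I_n}, [/\ H \subset A, #|H| = h & homogeneous G H]},
        trivIset F & #|A| <= #|F| * h + 2 ^ (h + h)].
Proof.
move=> sG h_gt0; have [m] := ubnP #|A|; elim: m A => // m IH A ltAm.
have [small|big] := ltnP #|A| (2 ^ (h + h)).
  exists set0; split; first by move=> H; rewrite inE.
  - by apply/trivIsetP=> ?; rewrite inE.
  - by rewrite cards0 ltnW.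
have [H [HA cH homH]] := ramsey_homogeneous sG big.
have cardA : #|A| = #|A :\: H| + h by rewrite cardsDS // cH subnK // -cH subset_leq_card.
have [|F [FP trivF cardF]] := IH (A :\: H); first by move: ltAm; rewrite cardA; lia.
have disjHF : {in F, forall H' : {set 'I_n}, [disjoint H & H']}.
  move=> H' /FP [H'A _ _]; rewrite disjoint_sym disjoints_subset.
  by apply: subset_trans H'A _; apply/subsetP=> x; rewrite !inE => /andP[].
have H0 : set0 \notin F.
  by apply/negP=> /FP[_ c0 _]; move: h_gt0; rewrite -c0 cards0.
have [trivHF HF] := trivIsetU1 disjHF trivF H0.
exists (H |: F); split=> //; last by rewrite cardsU1 HF mulSn; lia.
move=> H'; rewrite !inE => /orP[/eqP-> // | /FP [H'A cH' homH']]; split=> //.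
by apply: subset_trans H'A (subsetDl _ _).
Qed.

(** * Forbidden configurations of a meager family *)

Definition mixed k n (G : graph n) (w : 'I_n) (H : {set 'I_n}) : bool :=
  (k <= #|[set x in H | G (w, x)]|) && (k <= #|[set x in H | ~~ G (w, x)]|).

Lemma embed_star n (G : graph n) m (S : graph m) (c : 'I_m) (b : bool) k
    (H : {set 'I_n}) w :
  simple G -> simple S -> m <= k ->
  (forall x y, x != c -> y != c -> x != y -> S (x, y) = b) ->
  monochrome G b H -> w \notin H -> mixed k G w H ->
  exists g : 'I_m -> 'I_n, [/\ injective g, forall x, g x \in w |: H & induced G g = S].
Proof.
move=> sG sS le_mk Sb /monochromeP mH wH /andP[kN kM].
have small (C : {set 'I_m}) : #|C| <= k.
  by apply: (leq_trans _ le_mk); rewrite -[X in _ <= X](card_ord m) max_card.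
have [fN fN_inj fN_in] := leq_card_in_inj w (leq_trans (small [set x | S (c, x)]) kN).
have [fM fM_inj fM_in] := leq_card_in_inj w (leq_trans (small [set x | ~~ S (c, x)]) kM).
(* [c] goes to [w], its neighbours in [S] to neighbours of [w] in [H], its
   non-neighbours to non-neighbours. *)
pose g x := if x == c then w else if S (c, x) then fN x else fM x.
have gH x : x != c -> g x \in H /\ G (w, g x) = S (c, x).
  move=> xc; rewrite /g (negbTE xc); case Sx: (S (c, x)).
    by have := fN_in x; rewrite !inE Sx => /(_ isT) /andP[-> ->].
  by have := fM_in x; rewrite !inE Sx => /(_ isT) /andP[-> /negbTE->].
have g_inj : injective g.
  move=> x y; case: (eqVneq x c) => [->|xc]; case: (eqVneq y c) => [->|yc] //.
  - by rewrite {1}/g eqxx => wgy; have [] := gH y yc; rewrite -wgy (negbTE wH).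
  - by rewrite {2}/g eqxx => gxw; have [] := gH x xc; rewrite gxw (negbTE wH).
  move=> gxy; have eS : S (c, x) = S (c, y) by rewrite -(gH x xc).2 -(gH y yc).2 gxy.
  move: gxy; rewrite /g (negbTE xc) (negbTE yc) -eS.
  case Scx: (S (c, x)) eS => eS; [move/fN_inj | move/fM_inj];
    by apply; rewrite !inE ?Scx -?eS.
exists g; split=> // [x | ].
  case: (eqVneq x c) => [->|/gH[xH _]]; last by rewrite inE xH orbT.
  by rewrite /g eqxx setU11.
apply/ffunP=> -[x y]; rewrite ffunE /=.
case: (eqVneq x c) => [->|xc]; case: (eqVneq y c) => [->|yc].
- by rewrite !simple_irr.
- by have [_ <-] := gH y yc; rewrite /g eqxx.
- by rewrite simple_sym // (simple_sym _ _ sS); have [_ <-] := gH x xc; rewrite /g eqxx.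
case: (eqVneq x y) => [->|xy]; first by rewrite !simple_irr.
by rewrite Sb // mH ?(gH x xc).1 ?(gH y yc).1 ?(inj_eq g_inj).
Qed.

Lemma star_obstruction (T : graph_family) m (S : graph m) (c : 'I_m) (b : bool) k
    n (G : graph n) (Y H : {set 'I_n}) w :
  hereditary T -> simple G -> simple S -> ~~ T m S -> m <= k ->
  (forall x y, x != c -> y != c -> x != y -> S (x, y) = b) ->
  monochrome G b H -> H \subset Y -> w \in Y -> w \notin H -> mixed k G w H ->
  ~~ T _ (sub G Y).
Proof.
move=> hT sG sS nTS le_mk Sb mH HY wY wH mixH.
have [g [g_inj gY eS]] := embed_star sG sS le_mk Sb mH wH mixH.
rewrite -eS in nTS.
apply: contra nTS; apply: hereditary_induced_sub => // x.
by have := gY x; rewrite !inE => /orP[/eqP-> // | /(subsetP HY)].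
Qed.

Lemma meager_obstruction (T : graph_family) : hereditary T -> meager T ->
  exists k, forall n (G : graph n) (Y H : {set 'I_n}) w,
    simple G -> homogeneous G H -> H \subset Y -> w \in Y -> w \notin H ->
    mixed k G w H -> ~~ T _ (sub G Y).
Proof.
move=> hT [_ [[mS [S [sS [[cS starS] nTS]]]] [mA [A [sA [[cA starA] nTA]]]]]].
exists (maxn mS mA) => n G Y H w sG /orP[mH|mH].
- apply: (star_obstruction (c := cA) hT sG sA nTA (leq_maxr _ _) _ mH) => x y xc yc xy.
  apply/negPn/negP=> nAxy; have := starA x y; rewrite ffunE /= xy nAxy.
  by case/(_ isT) => [/eqP|/eqP]; rewrite ?(negbTE xc) ?(negbTE yc).
- apply: (star_obstruction (c := cS) hT sG sS nTS (leq_maxl _ _) _ mH) => x y xc yc xy.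
  by apply/negbTE/negP=> /starS [/eqP|/eqP]; rewrite ?(negbTE xc) ?(negbTE yc).
Qed.

(** * Independence of disjoint sets of edges *)

Definition toggle n (G : graph n) (S : {set 'I_n * 'I_n}) : graph n :=
  [ffun e => G e (+) ((e \in S) || ((e.2, e.1) \in S))].

Definition trace n (D : {set 'I_n * 'I_n}) (G : graph n) : {set 'I_n * 'I_n} :=
  [set e in D | G e].

Lemma toggleK n (S : {set 'I_n * 'I_n}) : involutive (fun G : graph n => toggle G S).
Proof. by move=> G; apply/ffunP=> e; rewrite !ffunE addbK. Qed.

Lemma trace_toggle_disjoint n (G : graph n) (D S : {set 'I_n * 'I_n}) :
  [disjoint S & D] -> {in D, forall e, (e.2, e.1) \notin S} ->
  trace D (toggle G S) = trace D G.
Proof.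
move=> SD DS; apply/setP=> e; rewrite !inE ffunE; case eD: (e \in D) => //=.
by rewrite (disjointFl SD eD) (negbTE (DS e eD)) addbF.
Qed.

Lemma trace_toggle n (G : graph n) (D S : {set 'I_n * 'I_n}) :
  {in D, forall e, (e.2, e.1) \notin D} -> S \subset D ->
  trace D (toggle G S) = [set e in D | (e \in trace D G) (+) (e \in S)].
Proof.
move=> D_asym SD; apply/setP=> e; rewrite !inE ffunE; case eD: (e \in D) => //=.
have /negbTE-> : (e.2, e.1) \notin S by apply: contra (D_asym e eD); apply: (subsetP SD).
by rewrite orbF.
Qed.

Lemma card_trace_in n (E : {set graph n}) (D : {set 'I_n * 'I_n})
    (B : {set {set 'I_n * 'I_n}}) :
  {in D, forall e, (e.2, e.1) \notin D} ->
  (forall G (S : {set 'I_n * 'I_n}), G \in E -> S \subset D -> toggle G S \in E) ->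
  B \subset powerset D ->
  #|[set G in E | trace D G \in B]| * 2 ^ #|D| = #|E| * #|B|.
Proof.
move=> D_asym E_toggle BD; set EB := [set G in E | trace D G \in B].
pose flip (X S : {set 'I_n * 'I_n}) : {set 'I_n * 'I_n} := [set e in D | (e \in X) (+) (e \in S)].
have flipD (X S : {set 'I_n * 'I_n}) : flip X S \subset D.
  by apply/subsetP=> e; rewrite inE => /andP[].
have flipK (X S : {set 'I_n * 'I_n}) : S \subset D -> flip X (flip X S) = S.
  move=> SD; apply/setP=> e; rewrite !inE; case eD: (e \in D); first by rewrite addKb.
  by apply/esym/negP=> /(subsetP SD); rewrite eD.
have trace_toggleE G (S : {set 'I_n * 'I_n}) :
    S \subset D -> trace D (toggle G S) = flip (trace D G) S.
  exact: trace_toggle.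
have BD' (S : {set 'I_n * 'I_n}) : S \in B -> S \subset D.
  by rewrite -powersetE; apply: (subsetP BD).
(* Double count the pairs (G, S) with G \in E, S \subset D and toggle G S \in EB. *)
have per_graph G : G \in E -> #|[set S in powerset D | toggle G S \in EB]| = #|B|.
  move=> GE; have -> : [set S in powerset D | toggle G S \in EB] = flip (trace D G) @: B.
    apply/setP=> S; rewrite !inE; apply/andP/imsetP => [[SD /andP[_ tB]] | [S' S'B ->]].
      by exists (flip (trace D G) S); rewrite ?flipK // -trace_toggleE.
    by rewrite flipD E_toggle ?flipD // trace_toggleE ?flipD // flipK ?BD'.
  rewrite card_in_imset // => S1 S2 /BD' S1D /BD' S2D e.
  by rewrite -(flipK (trace D G) S1) // e flipK.
have per_toggle (S : {set 'I_n * 'I_n}) :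
    S \in powerset D -> #|[set G in E | toggle G S \in EB]| = #|EB|.
  rewrite powersetE => SD; have -> : [set G in E | toggle G S \in EB] = (fun G => toggle G S) @: EB.
    apply/setP=> G; rewrite inE; apply/andP/imsetP => [[GE tB] | [G' G'B ->]].
      by exists (toggle G S); rewrite ?toggleK.
    rewrite toggleK G'B; split=> //.
    by move: G'B; rewrite inE => /andP[/E_toggle->].
  by rewrite card_imset //; apply: (can_inj (toggleK S)).
have double_count : \sum_(G in E) #|[set S in powerset D | toggle G S \in EB]|
    = \sum_(S in powerset D) #|[set G in E | toggle G S \in EB]|.
  under eq_bigr => G _ do rewrite card_set_sum.
  by rewrite exchange_big; apply: eq_bigr => S _; rewrite card_set_sum.
move: double_count; rewrite (eq_bigr _ per_graph) (eq_bigr _ per_toggle).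
by rewrite !sum_nat_const card_powerset [in RHS]mulnC => <-.
Qed.

Lemma card_traces_in n (E : {set graph n}) (X : eqType) (D : X -> {set 'I_n * 'I_n})
    (B : X -> {set {set 'I_n * 'I_n}}) c (s : seq X) :
  uniq s ->
  {in s, forall x, B x \subset powerset (D x) /\ #|B x| * 2 ^ c <= 2 ^ #|D x|} ->
  {in s &, forall x y, {in D x, forall e, (e.2, e.1) \notin D y}} ->
  {in s &, forall x y, x != y -> [disjoint D x & D y]} ->
  {in s, forall x G (S : {set 'I_n * 'I_n}), G \in E -> S \subset D x -> toggle G S \in E} ->
  #|[set G in E | all (fun x => trace (D x) G \in B x) s]| * 2 ^ (c * size s) <= #|E|.
Proof.
elim: s => [|x s IHs] /=.
  by move=> *; rewrite muln0 muln1 subset_leq_card //; apply/subsetP=> G; rewrite inE => /andP[].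
move=> /andP[xs us] BD DD Ddisj Etog.
have sub_s : {subset s <= x :: s} by move=> y ys; rewrite inE ys orbT.
have xxs : x \in x :: s := mem_head x s.
set Es := [set G in E | all (fun y => trace (D y) G \in B y) s].
have {}IHs : #|Es| * 2 ^ (c * size s) <= #|E|.
  apply: IHs => //.
  - by move=> y /sub_s; apply: BD.
  - by move=> y z /sub_s ys /sub_s; apply: DD.
  - by move=> y z /sub_s ys /sub_s; apply: Ddisj.
  - by move=> y /sub_s; apply: Etog.
have Es_toggle G (S : {set 'I_n * 'I_n}) : G \in Es -> S \subset D x -> toggle G S \in Es.
  rewrite !inE => /andP[GE /allP traces] SD; rewrite (Etog x) //=; apply/allP=> y ys.
  have xy : x != y by apply: contraNneq xs => ->.
  rewrite trace_toggle_disjoint ?traces //.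
    exact: disjointWl SD (Ddisj x y xxs (sub_s _ ys) xy).
  by move=> e /(DD y x (sub_s _ ys) xxs); apply: contra; apply: (subsetP SD).
have [BxD cardBx] := BD x xxs.
have := card_trace_in (DD x x xxs xxs) Es_toggle BxD.
have -> : [set G in Es | trace (D x) G \in B x]
    = [set G in E | (trace (D x) G \in B x) && all (fun y => trace (D y) G \in B y) s].
  by apply/setP=> G; rewrite !inE -andbA; congr andb; apply: andbC.
set Ex := [set G in E | _] => cardEx.
have {}cardEx : #|Ex| * 2 ^ c <= #|Es|.
  rewrite -(leq_pmul2r (expn_gt0 2 #|D x|)) mulnAC cardEx -mulnA.
  by rewrite leq_mul2l cardBx orbT.
by rewrite mulnS expnD mulnA (leq_trans _ IHs) // leq_mul2r cardEx orbT.
Qed.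

Definition unbalanced (T : finType) k (D : {set T}) : {set {set T}} :=
  [set S in powerset D | (#|S| < k) || (#|D :\: S| < k)].

Lemma bin_leq_exp n m : 'C(n, m) <= n ^ m.
Proof.
rewrite -(leq_pmul2r (fact_gt0 m)) bin_ffact (leq_trans _ (leq_pmulr _ (fact_gt0 m))) //.
rewrite ffact_prod (leq_trans (_ : _ <= \prod_(i < m) n)) //.
  by apply: leq_prod => i _; apply: leq_subr.
by rewrite big_const_ord iter_muln muln1.
Qed.

Lemma card_small_subsets (T : finType) (D : {set T}) k : 0 < #|D| ->
  #|[set S : {set T} | S \subset D & #|S| < k]| <= k * #|D| ^ k.
Proof.
move=> D_gt0; elim: k => [|k IHk].
  by rewrite leqn0 cards_eq0; apply/eqP/setP=> S; rewrite !inE ltn0 andbF.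
have -> : [set S : {set T} | S \subset D & #|S| < k.+1]
    = [set S : {set T} | S \subset D & #|S| < k] :|: [set S : {set T} | S \subset D & #|S| == k].
  by apply/setP=> S; rewrite !inE ltnS leq_eqVlt orbC andb_orr.
apply: leq_trans (leq_card_setU _ _) _; rewrite cards_draws mulSn addnC.
have leDk : #|D| ^ k <= #|D| ^ k.+1 by rewrite leq_pexp2l.
apply: leq_add; first exact: leq_trans (bin_leq_exp _ _) leDk.
by apply: leq_trans IHk _; rewrite leq_mul2l leDk orbT.
Qed.

Lemma card_unbalanced (T : finType) k (D : {set T}) : 0 < #|D| ->
  #|unbalanced k D| <= 2 * (k * #|D| ^ k).
Proof.
move=> D_gt0; set small := [set S : {set T} | S \subset D & #|S| < k].
have sub_small : unbalanced k D \subset small :|: [set D :\: S | S in small].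
  apply/subsetP=> S; rewrite !inE => /andP[SD /orP[ltSk | ltDSk]]; first by rewrite SD ltSk.
  apply/orP; right; apply/imsetP; exists (D :\: S); first by rewrite inE subsetDl ltDSk.
  by rewrite setDDr setDv set0U; apply/esym/setIidPr.
apply: leq_trans (subset_leq_card sub_small) _; apply: leq_trans (leq_card_setU _ _) _.
rewrite mul2n -addnn; apply: leq_add; first exact: card_small_subsets.
by apply: leq_trans (leq_imset_card _ _) _; apply: card_small_subsets.
Qed.

Lemma exp2_ge_linear A : exists m0, forall m, m0 <= m -> A * m.+1 <= 2 ^ m.
Proof.
exists ((A + 2) * (A + 2)) => m le_m0m.
have -> : 2 ^ m = 2 ^ (A + 1) * 2 ^ (m - (A + 1)) by rewrite -expnD subnKC //; lia.
have h1 : A + 1 < 2 ^ (A + 1) by apply: ltn_expl.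
have h2 : m - (A + 1) < 2 ^ (m - (A + 1)) by apply: ltn_expl.
apply: leq_trans (_ : (A + 2) * (m - A) <= _); last by apply: leq_mul; lia.
have -> : m - A = m - (A + 1) + 1 by lia.
nia.
Qed.

Lemma exp2_ge_poly a k : exists2 h, 0 < h & a * h ^ k <= 2 ^ h.
Proof.
have [m0 hm0] := exp2_ge_linear (a + k).
exists (2 ^ m0.+1); first by rewrite expn_gt0.
have := hm0 m0.+1 (leqnSn _); rewrite -expnM => le_m.
have le_a : a <= 2 ^ a by apply/ltnW/ltn_expl.
apply: leq_trans (_ : 2 ^ a * 2 ^ (m0.+1 * k) <= _); first by rewrite leq_mul2r le_a orbT.
rewrite -expnD leq_pexp2l //; nia.
Qed.

Section RealBounds.
Local Open Scope R_scope.

Lemma balanced_parts_large l eps : (0 < l)%N -> 0 < eps ->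
  exists N, forall n, (N <= n)%N -> forall p : {ffun 'I_n -> 'I_l}, balanced eps p ->
    forall i, (n <= 2 * l * #|part p i|)%N.
Proof.
move=> l_gt0 eps_gt0.
have l_pos : 0 < INR l by apply: lt_0_INR; apply/ltP.
set a := ln (2 * INR l) / eps.
have [N ltN] := INR_unbounded (exp a).
exists N => n le_Nn p bal i.
have le_Nn' : INR N <= INR n by apply/le_INR/leP.
have n_pos : 0 < INR n by have := exp_pos a; lra.
have lt_a : a < ln (INR n).
  by rewrite -(ln_exp a); apply: ln_increasing; [exact: exp_pos | lra].
have lt_2l : ln (2 * INR l) < eps * ln (INR n).
  have : a * eps < ln (INR n) * eps by apply: Rmult_lt_compat_r.
  by rewrite /a /Rdiv Rmult_assoc Rinv_l; lra.
have small_dev : Rpower (INR n) (1 - eps) <= INR n / (2 * INR l).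
  rewrite /Rpower.
  have -> : (1 - eps) * ln (INR n) = ln (INR n) + - (eps * ln (INR n)) by ring.
  rewrite exp_plus exp_ln //.
  have : exp (- (eps * ln (INR n))) < exp (- ln (2 * INR l)) by apply: exp_increasing; lra.
  rewrite [exp (- ln _)]exp_Ropp exp_ln; last by lra.
  by move=> lt_exp; rewrite /Rdiv; apply: Rmult_le_compat_l; lra.
have dev : INR n / INR l - INR #|part p i| <= INR n / (2 * INR l).
  apply: Rle_trans small_dev; apply: Rle_trans (bal i).
  by rewrite Rabs_minus_sym; apply: Rle_abs.
have half : INR n / (2 * INR l) <= INR #|part p i|.
  have : INR n / INR l = 2 * (INR n / (2 * INR l)) by field; lra.
  lra.
apply/leP/INR_le; rewrite !mult_INR.
have -> : INR n = 2 * INR l * (INR n / (2 * INR l)) by field; lra.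
by apply: Rmult_le_compat_l; lra.
Qed.

Lemma fraction_of_good (E good bad K : nat) eta :
  E = (good + bad)%N -> (bad * K <= E)%N -> 1 <= INR K * eta -> 0 < eta ->
  (1 - eta) * INR E <= INR good.
Proof.
move=> -> le_bad le_K eta_pos.
have le_bad' : INR bad * INR K <= INR (good + bad) by rewrite -mult_INR; apply/le_INR/leP.
have := pos_INR bad; have := pos_INR good.
rewrite plus_INR in le_bad' * => ge0_good ge0_bad.
have : INR bad * 1 <= INR bad * (INR K * eta) by apply: Rmult_le_compat_l.
have : INR bad * INR K * eta <= (INR good + INR bad) * eta by apply: Rmult_le_compat_r; lra.
nra.
Qed.

End RealBounds.

(** * Mixed vertices in random extensions *)

Definition star n (w : 'I_n) (H : {set 'I_n}) : {set 'I_n * 'I_n} := [set (w, x) | x in H].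

Lemma card_star n (w : 'I_n) H : #|star w H| = #|H|.
Proof. by rewrite card_imset // => x y []. Qed.

Lemma starP n (w : 'I_n) H e : e \in star w H -> e.1 = w /\ e.2 \in H.
Proof. by case/imsetP=> x xH ->. Qed.

Lemma mixedE k n (G : graph n) w H :
  mixed k G w H = (trace (star w H) G \notin unbalanced k (star w H)).
Proof.
have star_sep (P : pred ('I_n * 'I_n)) :
    [set e in star w H | P e] = star w [set x in H | P (w, x)].
  apply/setP=> -[a b]; rewrite !inE; apply/andP/imsetP => [[/imsetP[x xH [-> ->]] Pe] | ].
    by exists x; rewrite ?inE ?xH.
  by case=> x; rewrite inE => /andP[xH Px] [-> ->]; split=> //; apply: imset_f.
have eN : trace (star w H) G = star w [set x in H | G (w, x)] := star_sep G.
have eM : star w H :\: trace (star w H) G = star w [set x in H | ~~ G (w, x)].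
  rewrite -(star_sep (fun e => ~~ G e)); apply/setP=> e.
  by rewrite !inE; case: (e \in star w H); case: (G e).
have trD : trace (star w H) G \subset star w H by apply/subsetP=> e; rewrite inE => /andP[].
by rewrite /unbalanced inE powersetE trD eM eN !card_star negb_or -!leqNgt.
Qed.

Section Extensions.
Variables (n l : nat) (p : {ffun 'I_n -> 'I_l}) (Gs : forall i : 'I_l, graph #|part p i|).

Definition extensions : {set graph n} := [set G | @extension n l p Gs G].

Lemma extension_agree G G' x y : G \in extensions -> G' \in extensions ->
  p x = p y -> G (x, y) = G' (x, y).
Proof.
rewrite !inE => /andP[_ /forallP /(_ (p x)) /eqP eG] /andP[_ /forallP /(_ (p x)) /eqP eG'] pxy.
have xP : x \in part p (p x) by rewrite inE.
have yP : y \in part p (p x) by rewrite inE pxy.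
have sub_val (K : graph n) : sub K (part p (p x)) (enum_rank_in xP x, enum_rank_in xP y) = K (x, y).
  by rewrite ffunE /= !enum_rankK_in.
by rewrite -(sub_val G) -(sub_val G') eG eG'.
Qed.

Lemma toggle_extension G (S : {set 'I_n * 'I_n}) :
  {in S, forall e, p e.1 != p e.2} -> G \in extensions -> toggle G S \in extensions.
Proof.
move=> S_cross; rewrite !inE => /andP[/andP[irr sym] /forallP eGs].
have S_out x y : p x = p y -> ((x, y) \in S) = false.
  by move=> pxy; apply/negbTE/negP=> /S_cross; rewrite pxy eqxx.
apply/andP; split; first (apply/andP; split).
- by apply/forallP=> x; rewrite ffunE /= S_out //= addbF; move/forallP: irr.
- apply/forallP=> x; apply/forallP=> y; rewrite !ffunE /= orbC.
  by move/forallP: sym => /(_ x) /forallP /(_ y) /eqP->.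
apply/forallP=> i; rewrite -(eqP (eGs i)); apply/eqP/ffunP=> -[a b].
have /[!inE] /eqP pa := enum_valP a; have /[!inE] /eqP pb := enum_valP b.
by rewrite !ffunE /= !S_out ?addbF // pa pb.
Qed.

End Extensions.

Arguments extensions {n l} p Gs.

Section MixedCounting.
Variables (n l : nat) (p : {ffun 'I_n -> 'I_l}) (Gs : forall i : 'I_l, graph #|part p i|)
  (k h c : nat).
Hypothesis h_gt0 : 0 < h.
Hypothesis unbalanced_rare : 2 * (k * h ^ k) * 2 ^ c <= 2 ^ h.
Local Notation EX := (@extensions n l p Gs).

Lemma card_unbalanced_star w (H : {set 'I_n}) : #|H| = h ->
  #|unbalanced k (star w H)| * 2 ^ c <= 2 ^ #|star w H|.
Proof.
move=> cH; rewrite card_star cH (leq_trans _ unbalanced_rare) // leq_mul2r.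
by have := @card_unbalanced _ k (star w H); rewrite card_star cH => ->; rewrite ?orbT.
Qed.

Lemma card_none_mixed (s : seq ('I_n * {set 'I_n})) :
  uniq s ->
  {in s, forall u : 'I_n * {set 'I_n}, #|u.2| = h /\ {in u.2, forall x, p x != p u.1}} ->
  {in s &, forall u v : 'I_n * {set 'I_n}, u.1 \notin v.2} ->
  {in s &, forall u v : 'I_n * {set 'I_n}, u != v -> (u.1 != v.1) || [disjoint u.2 & v.2]} ->
  #|[set G in EX | all (fun u => ~~ mixed k G u.1 u.2) s]| * 2 ^ (c * size s) <= #|EX|.
Proof.
move=> s_uniq s_shape s_out s_disj.
have -> : [set G in EX | all (fun u => ~~ mixed k G u.1 u.2) s]
    = [set G in EX | all (fun u => trace (star u.1 u.2) G \in unbalanced k (star u.1 u.2)) s].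
  by apply/setP=> G; rewrite !inE; congr andb; apply: eq_all => u; rewrite mixedE negbK.
apply: (card_traces_in (D := fun u => star u.1 u.2) (B := fun u => unbalanced k (star u.1 u.2)))
  => //.
- move=> u us; have [cH _] := s_shape u us; split; last exact: card_unbalanced_star.
  by apply/subsetP=> S; rewrite inE => /andP[].
- move=> u v us vs e /starP[eu _]; apply/negP=> /starP[_ /=]; rewrite eu.
  by apply/negP; apply: s_out.
- move=> u v us vs uv; rewrite -setI_eq0; apply/eqP/setP=> e; rewrite !inE.
  apply/negP=> /andP[/starP[eu xu] /starP[ev xv]].
  case/orP: (s_disj u v us vs uv) => [|dis]; first by rewrite -eu -ev eqxx.
  by rewrite (disjointFr dis xu) in xv.
- move=> u us G S GE SD; apply: toggle_extension GE => e /(subsetP SD) /starP[-> ex].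
  by have [_ /(_ _ ex)] := s_shape u us; rewrite eq_sym.
Qed.

Lemma card_no_mixed_in (i : 'I_l) (H W : {set 'I_n}) :
  #|H| = h -> [disjoint H & part p i] -> W \subset part p i ->
  #|[set G in EX | [forall w in W, ~~ mixed k G w H]]| * 2 ^ (c * #|W|) <= #|EX|.
Proof.
move=> cH dHi Wi.
have Wp w : w \in W -> p w = i by move/(subsetP Wi); rewrite inE => /eqP.
have Hp x : x \in H -> p x != i by move/(disjointFr dHi); rewrite inE => /negbT.
have := @card_none_mixed [seq (w, H) | w <- enum W].
rewrite size_map -cardE; under eq_finset => G do rewrite all_map all_enum.
apply.
- by rewrite map_inj_uniq ?enum_uniq // => w1 w2 [].
- move=> _ /mapP[w wW ->]; rewrite mem_enum in wW.
  by split=> // x /Hp; rewrite (Wp w wW).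
- move=> _ _ /mapP[w1 w1W ->] /mapP[w2 _ ->] /=; rewrite mem_enum in w1W.
  by apply/negP=> /Hp; rewrite (Wp w1 w1W) eqxx.
- by move=> _ _ /mapP[w1 _ ->] /mapP[w2 _ ->]; rewrite /= eqE /= eqxx andbT => ->.
Qed.

Lemma card_no_mixed_among (i : 'I_l) v (J : {set {set 'I_n}}) :
  p v != i -> {in J, forall H : {set 'I_n}, H \subset part p i /\ #|H| = h} -> trivIset J ->
  #|[set G in EX | [forall H in J, ~~ mixed k G v H]]| * 2 ^ (c * #|J|) <= #|EX|.
Proof.
move=> pv J_shape /trivIsetP J_triv.
have Hp H x : H \in J -> x \in H -> p x = i.
  by move=> /J_shape[/subsetP HP _] /HP; rewrite inE => /eqP.
have := @card_none_mixed [seq (v, H) | H <- enum J].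
rewrite size_map -cardE; under eq_finset => G do rewrite all_map all_enum.
apply.
- by rewrite map_inj_uniq ?enum_uniq // => H1 H2 [].
- move=> _ /mapP[H HJ ->]; rewrite mem_enum in HJ; split; first by have [] := J_shape H HJ.
  by move=> x /(Hp H x HJ) ->; rewrite eq_sym.
- move=> _ _ /mapP[H1 _ ->] /mapP[H2 H2J ->] /=; rewrite mem_enum in H2J.
  by apply/negP=> /(Hp H2 v H2J) /eqP; rewrite (negbTE pv).
- move=> _ _ /mapP[H1 H1J ->] /mapP[H2 H2J ->] /=; rewrite !mem_enum in H1J H2J.
  by rewrite eqxx /= => neH; apply: J_triv => //; apply: contraNneq neH => ->.
Qed.

Lemma card_few_mixed (i : 'I_l) v (F : {set {set 'I_n}}) L :
  p v != i -> {in F, forall H : {set 'I_n}, H \subset part p i /\ #|H| = h} ->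
  trivIset F -> 2 <= c ->
  #|[set G in EX | #|[set H in F | mixed k G v H]| <= L]| * 2 ^ #|F| <= #|EX| * 2 ^ (c * L).
Proof.
move=> pv F_shape F_triv c_ge2.
set I := [set J in powerset F | #|F| <= #|J| + L].
pose none_mixed (J : {set {set 'I_n}}) := [set G in EX | [forall H in J, ~~ mixed k G v H]].
have cover : [set G in EX | #|[set H in F | mixed k G v H]| <= L]
    \subset \bigcup_(J in I) none_mixed J.
  apply/subsetP=> G; rewrite inE => /andP[GE few]; apply/bigcupP.
  exists [set H in F | ~~ mixed k G v H].
    rewrite !inE; apply/andP; split; first by apply/subsetP=> H; rewrite inE => /andP[].
    suff <- : #|[set H in F | mixed k G v H]| + #|[set H in F | ~~ mixed k G v H]| = #|F|.
      by rewrite addnC leq_add2l.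
    rewrite -(cardsID [set H | mixed k G v H] F).
    by congr (_ + _); apply: eq_card => H; rewrite !inE // andbC.
  by rewrite inE GE; apply/forall_inP=> H; rewrite inE => /andP[].
have each : {in I, forall J, #|none_mixed J| * 2 ^ (2 * #|F|) <= #|EX| * 2 ^ (c * L)}.
  move=> J; rewrite inE powersetE => /andP[JF leF].
  have J_shape : {in J, forall H : {set 'I_n}, H \subset part p i /\ #|H| = h}.
    by move=> H /(subsetP JF); apply: F_shape.
  have le_none := card_no_mixed_among pv J_shape (trivIsetS JF F_triv).
  apply: leq_trans (_ : #|none_mixed J| * (2 ^ (c * #|J|) * 2 ^ (c * L)) <= _).
    by rewrite leq_mul2l -expnD leq_pexp2l ?orbT //; nia.
  by rewrite mulnA leq_mul2r le_none orbT.
have le_few := union_bound cover each.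
rewrite -(leq_pmul2r (expn_gt0 2 #|F|)) -mulnA -expnD addnn -mul2n.
apply: leq_trans le_few _; rewrite mulnC leq_mul2l; apply/orP; right.
by rewrite -card_powerset; apply: subset_leq_card; apply/subsetP=> J; rewrite inE => /andP[].
Qed.
End MixedCounting.

(** * Rigidity of (T,l)-partitions *)

Section Rigidity.
Variables (T : graph_family) (n l k h d L : nat) (p : {ffun 'I_n -> 'I_l}) (G : graph n)
  (fam : 'I_l -> {set {set 'I_n}}).
Hypothesis sG : simple G.
Hypothesis obstruction : forall (Y H : {set 'I_n}) w, homogeneous G H -> H \subset Y -> w \in Y ->
  w \notin H -> mixed k G w H -> ~~ @T _ (sub G Y).
Hypothesis mixed_in_large : forall i (H W : {set 'I_n}), #|H| = h -> [disjoint H & part p i] ->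
  W \subset part p i -> n < d * #|W| -> exists2 w, w \in W & mixed k G w H.
Hypothesis many_mixed : forall i v, p v != i -> L < #|[set H in fam i | mixed k G v H]|.
Hypothesis fam_shape :
  forall i, {in fam i, forall H : {set 'I_n}, H \subset part p i /\ homogeneous G H}.
Hypothesis fam_triv : forall i, trivIset (fam i).
Hypothesis parts_large : forall i, l * n < d * #|part p i|.
Hypothesis ramsey_small : d * 2 ^ (h + h) <= n.
Hypothesis L_large : l * 2 ^ (h + h) <= L.

Variable q : {ffun 'I_n -> 'I_l}.
Hypothesis Tq : Fl_partition T G q.

Let Z j i := part q j :&: part p i.

Lemma fiber_block i j : [set x in part p i | q x == j] = Z j i.
Proof. by apply/setP=> x; rewrite !inE andbC. Qed.

Lemma not_two_large_blocks j i i' : i != i' ->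
  2 ^ (h + h) <= #|Z j i| -> n < d * #|Z j i'| -> False.
Proof.
move=> ii' bigZ bigZ'.
have [H [HZ cH homH]] := ramsey_homogeneous sG bigZ.
have HQ : H \subset part q j := subset_trans HZ (subsetIl _ _).
have dH : [disjoint H & part p i'].
  rewrite disjoint_sym disjoints_subset; apply/subsetP=> x; rewrite !inE => /eqP pxi'.
  by apply/negP=> /(subsetP HZ); rewrite !inE pxi' => /andP[_ /eqP eii']; rewrite eii' eqxx in ii'.
have [w /setIP[wQ wP] mixw] := mixed_in_large cH dH (subsetIr _ _) bigZ'.
have wH : w \notin H by rewrite (disjointFl dH wP).
by move/forallP: Tq => /(_ j); apply/negP; apply: obstruction homH HQ wQ wH mixw.
Qed.

Lemma exists_large_block i : exists j, n < d * #|Z j i|.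
Proof.
apply/existsP; apply: contraLR (parts_large i); rewrite negb_exists -leqNgt => /forallP small.
rewrite -(sum_card_fibers q (part p i)) big_distrr /=.
apply: leq_trans (_ : \sum_(j < l) n <= _); last by rewrite sum_nat_const card_ord.
by apply: leq_sum => j _; rewrite fiber_block leqNgt small.
Qed.

Lemma block_matching : exists2 sigma : 'I_l -> 'I_l,
  injective sigma & forall i j, j != sigma i -> #|Z j i| < 2 ^ (h + h).
Proof.
have [sigma large] := fin_all_exists exists_large_block.
have large_R i : 2 ^ (h + h) <= #|Z (sigma i) i|.
  have d_gt0 : 0 < d by case: d large => // /(_ i).
  by apply: ltnW; rewrite -(ltn_pmul2l d_gt0); apply: leq_ltn_trans ramsey_small (large i).
have sigma_inj : injective sigma.
  move=> i i' e; apply/eqP; apply: contraT => ii'.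
  by case: (not_two_large_blocks ii' (large_R i)); rewrite e; apply: large.
exists sigma => // i j jsi; rewrite ltnNge; apply/negP=> bigZ.
have /codomP[i0 ji0] := inj_card_onto sigma_inj (leqnn _) j.
have ii0 : i != i0 by apply/eqP=> ii0; rewrite ji0 ii0 eqxx in jsi.
by apply: (not_two_large_blocks ii0 bigZ); rewrite ji0; apply: large.
Qed.

Lemma part_almost_in sigma i : (forall j, j != sigma i -> #|Z j i| < 2 ^ (h + h)) ->
  #|part p i :\: part q (sigma i)| <= L.
Proof.
move=> small; apply: leq_trans L_large.
have := sum_card_fibers q (part p i); rewrite (bigD1 (sigma i)) //= fiber_block.
rewrite -(cardsID (part q (sigma i)) (part p i)) setIC => /eqP; rewrite eqn_add2l => /eqP <-.
apply: leq_trans (_ : \sum_(j < l | j != sigma i) 2 ^ (h + h) <= _).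
  by apply: leq_sum => j /small; rewrite fiber_block => /ltnW.
rewrite sum_nat_cond_const leq_mul2r; apply/orP; right.
by rewrite -[X in _ <= X]card_ord max_card.
Qed.

Lemma partition_matched sigma : injective sigma ->
  (forall i j, j != sigma i -> #|Z j i| < 2 ^ (h + h)) -> forall x, q x = sigma (p x).
Proof.
move=> sigma_inj small x.
have /codomP[i0 qx] := inj_card_onto sigma_inj (leqnn _) (q x).
case: (eqVneq (p x) i0) => [-> // | pxi0]; exfalso.
have sub_fam : [set H in fam i0 | mixed k G x H] \subset fam i0.
  by apply/subsetP=> H; rewrite inE => /andP[].
have [H /setIdP[Hfam mixH] dH] := trivIset_disjoint_member (trivIsetS sub_fam (fam_triv i0))
  (leq_ltn_trans (part_almost_in (small i0)) (many_mixed pxi0)).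
have [HP homH] := fam_shape Hfam.
have HQ : H \subset part q (q x).
  apply/subsetP=> y yH; have := disjointFr dH yH.
  by rewrite in_setD (subsetP HP y yH) andbT -qx => /negbFE.
have xQ : x \in part q (q x) by rewrite inE.
have xH : x \notin H by apply: contra pxi0 => /(subsetP HP); rewrite inE.
by move/forallP: Tq => /(_ (q x)); apply/negP; apply: obstruction homH HQ xQ xH mixH.
Qed.

Theorem Fl_partition_rigid x y : (p x == p y) = (q x == q y).
Proof.
have [sigma sigma_inj small] := block_matching.
by rewrite !(partition_matched sigma_inj small) (inj_eq sigma_inj).
Qed.

End Rigidity.

Section AlmostAllExtensions.
Variables (T : graph_family) (k n l : nat) (p : {ffun 'I_n -> 'I_l})
  (Gs : forall i : 'I_l, graph #|part p i|) (h c d K : nat).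
Hypothesis obstruction : forall m (G : graph m) (Y H : {set 'I_m}) w,
  simple G -> homogeneous G H -> H \subset Y -> w \in Y -> w \notin H ->
  mixed k G w H -> ~~ @T _ (sub G Y).
Hypothesis TGs : forall i, @T _ (Gs i).
Hypothesis l_gt0 : 0 < l.
Hypothesis h_gt0 : 0 < h.
Hypothesis unbalanced_rare : 2 * (k * h ^ k) * 2 ^ c <= 2 ^ h.
Hypothesis c_large : 3 * d <= c.
Hypothesis parts_large : forall i, l * n < d * #|part p i|.
Hypothesis ramsey_small : d * 2 ^ (h + h) <= n.
Hypothesis K_small : 2 * K * l <= 2 ^ n.
Hypothesis packing_large : forall i m, #|part p i| <= m * h + 2 ^ (h + h) ->
  2 * K * l * n * 2 ^ (c * (l * 2 ^ (h + h))) <= 2 ^ m.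

Local Notation EX := (@extensions n l p Gs).
Local Notation L := (l * 2 ^ (h + h)).

Definition admissible : {set 'I_l * {set 'I_n} * {set 'I_n}} :=
  [set u : 'I_l * {set 'I_n} * {set 'I_n} | let: (i, H, W) := u in
           [&& #|H| == h, [disjoint H & part p i], W \subset part p i & n < d * #|W|]].

Definition unmixed (u : 'I_l * {set 'I_n} * {set 'I_n}) : {set graph n} :=
  [set G in EX | [forall w in u.2, ~~ mixed k G w u.1.2]].

Definition bad_mixing : {set graph n} := \bigcup_(u in admissible) unmixed u.

Lemma card_bad_mixing : #|bad_mixing| * (2 * K) <= #|EX|.
Proof.
have each : {in admissible, forall u, #|unmixed u| * 2 ^ (n + (n + n)) <= #|EX|}.
  move=> [[i H] W]; rewrite inE => /and4P[/eqP cH dH WP ltW].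
  apply: leq_trans (card_no_mixed_in Gs h_gt0 unbalanced_rare cH dH WP); rewrite leq_mul2l.
  by rewrite leq_pexp2l ?orbT //; nia.
have card_adm : #|admissible| <= l * 2 ^ (n + n).
  by rewrite (leq_trans (max_card _)) // !card_prod card_ord !card_set_type card_ord expnD mulnA.
have le_bad := union_bound (subxx _) each; rewrite expnD mulnA in le_bad.
have {}le_bad : #|bad_mixing| * 2 ^ n <= l * #|EX|.
  rewrite -(leq_pmul2r (expn_gt0 2 (n + n))) (leq_trans le_bad) // mulnAC leq_mul2r.
  by rewrite card_adm orbT.
by rewrite -(leq_pmul2l l_gt0) (leq_trans _ le_bad) // mulnCA leq_mul2l mulnC K_small orbT.
Qed.

Let d_gt0 : 0 < d.
Proof. by have := parts_large (Ordinal l_gt0); case: d. Qed.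

Section Packing.
Variable fam : 'I_l -> {set {set 'I_n}}.
Hypothesis fam_shape :
  forall i, {in fam i, forall H : {set 'I_n}, H \subset part p i /\ #|H| = h}.
Hypothesis fam_triv : forall i, trivIset (fam i).
Hypothesis fam_large : forall i, #|part p i| <= #|fam i| * h + 2 ^ (h + h).
Hypothesis fam_homogeneous :
  forall i G, G \in EX -> {in fam i, forall H : {set 'I_n}, homogeneous G H}.

Definition crossing : {set 'I_l * 'I_n} := [set iv | p iv.2 != iv.1].

Definition few_mixed (iv : 'I_l * 'I_n) : {set graph n} :=
  [set G in EX | #|[set H in fam iv.1 | mixed k G iv.2 H]| <= L].

Definition bad_few : {set graph n} := \bigcup_(iv in crossing) few_mixed iv.

Lemma card_bad_few : #|bad_few| * (2 * K) <= #|EX|.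
Proof.
have c_ge2 : 2 <= c by move: c_large d_gt0; lia.
have each : {in crossing, forall iv, #|few_mixed iv| * (2 * K * l * n) <= #|EX|}.
  move=> [i v]; rewrite inE /= => pv.
  have le_few := card_few_mixed Gs h_gt0 unbalanced_rare L pv (@fam_shape i) (fam_triv i) c_ge2.
  rewrite -(leq_pmul2r (expn_gt0 2 (c * L))) -mulnA (leq_trans _ le_few) //.
  by rewrite leq_mul2l (packing_large (fam_large i)) orbT.
have n_gt0 : 0 < n by rewrite (leq_trans _ ramsey_small) // muln_gt0 d_gt0 expn_gt0.
have le_bad := union_bound (subxx _) each.
have card_crossing : #|crossing| <= l * n.
  by rewrite (leq_trans (max_card _)) // card_prod !card_ord.
have ln_gt0 : 0 < l * n by rewrite muln_gt0 l_gt0.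
rewrite -(leq_pmul2r ln_gt0) (_ : _ * _ * _ = #|bad_few| * (2 * K * l * n)).
  by rewrite (leq_trans le_bad) // mulnC leq_mul2l card_crossing orbT.
by rewrite -!mulnA.
Qed.

Lemma unique_outside_bad G : G \in EX -> G \notin bad_mixing -> G \notin bad_few ->
  unique_Fl_partition T G p.
Proof.
move=> GE not_bad1 not_bad2.
have /andP[sG /forallP eGs] : @extension n l p Gs G by rewrite inE in GE.
have Tp : Fl_partition T G p by apply/forallP=> i; rewrite (eqP (eGs i)).
rewrite /unique_Fl_partition Tp; apply/forall_inP=> q Tq.
apply/forallP=> x; apply/forallP=> y; apply/eqP.
apply: (Fl_partition_rigid sG _ _ _ _ fam_triv parts_large ramsey_small (leqnn L) Tq).
- by move=> Y H w; apply: obstruction.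
- move=> i H W cH dH WP ltW; apply/exists_inP; apply: contraR not_bad1 => none.
  apply/bigcupP; exists (i, H, W); first by rewrite inE cH eqxx dH WP ltW.
  rewrite inE GE; apply/forall_inP=> w wW; apply: contra none => mixw.
  by apply/exists_inP; exists w.
- move=> i v pv; rewrite ltnNge; apply: contra not_bad2 => few.
  by apply/bigcupP; exists (i, v); rewrite inE ?GE ?pv.
- by move=> i H HF; split; [case: (fam_shape HF) | exact: (@fam_homogeneous i G GE H HF)].
Qed.

End Packing.

Lemma card_not_unique : #|EX :\: [set G | unique_Fl_partition T G p]| * K <= #|EX|.
Proof.
have [EX0 | [G0 G0E]] := set_0Vmem EX; first by rewrite EX0 set0D cards0.
have sG0 : simple G0 by move: G0E; rewrite inE => /andP[].
(* The packings are chosen in one extension G0; they stay homogeneous in every extension,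
   whose edges inside a part are those of the corresponding Gs i. *)
have [fam fam_spec] := fin_all_exists (fun i => homogeneous_packing (part p i) sG0 h_gt0).
have fam_shape i : {in fam i, forall H : {set 'I_n}, H \subset part p i /\ #|H| = h}.
  by move=> H HF; case: (fam_spec i) => /(_ H HF)[].
have fam_homogeneous i G : G \in EX -> {in fam i, forall H : {set 'I_n}, homogeneous G H}.
  move=> GE H HF; case: (fam_spec i) => /(_ H HF)[HP _ homH] _ _.
  rewrite (homogeneous_eq (G' := G0)) // => x y xH yH; apply: (@extension_agree n l p Gs) => //.
  by move: (subsetP HP x xH) (subsetP HP y yH); rewrite !inE => /eqP-> /eqP->.
have fam_triv i : trivIset (fam i) by case: (fam_spec i).
have fam_large i : #|part p i| <= #|fam i| * h + 2 ^ (h + h) by case: (fam_spec i).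
have cover : EX :\: [set G | unique_Fl_partition T G p] \subset bad_mixing :|: bad_few fam.
  apply/subsetP=> G /setDP[GE]; rewrite inE in_setU => not_unique.
  have [// | nb1] := boolP (G \in bad_mixing); have [// | nb2] := boolP (G \in bad_few fam).
  by rewrite (unique_outside_bad fam_shape) in not_unique.
have := leq_add card_bad_mixing (card_bad_few fam_shape fam_triv fam_large).
rewrite -mulnDl addnn -mul2n mulnCA leq_pmul2l // => le_bad.
apply: leq_trans le_bad; rewrite leq_mul2r; apply/orP; right.
exact: leq_trans (subset_leq_card cover) (leq_card_setU _ _).
Qed.
End AlmostAllExtensions.

Lemma almost_all_unique_partition (T : graph_family) (l : nat) (eps : R) (K : nat) :
  hereditary T -> meager T -> 0 < l -> Rlt R0 eps ->
  exists n0, forall n, n0 <= n ->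
  forall (p : {ffun 'I_n -> 'I_l}) (Gs : forall i : 'I_l, graph #|part p i|),
    (forall i, T _ (Gs i)) -> balanced eps p ->
    #|extensions p Gs :\: [set G | unique_Fl_partition T G p]| * K <= #|extensions p Gs|.
Proof.
move=> hT mT l_gt0 eps_gt0.
have [k obstruction] := meager_obstruction hT mT.
(* With d = 4 l^2 some part of q keeps more than n / d vertices of each part of p, and
   c = 3 d bounds the probability that no vertex of W is mixed on H by 2^(-3n), which
   beats the l 4^n choices of (i, H, W). *)
set d := 4 * l * l; set c := 3 * d.
have [h h_gt0 le_h] := exp2_ge_poly (2 * k * 2 ^ c) k.
set R := 2 ^ (h + h).
have [N1 parts_half] := balanced_parts_large l_gt0 eps_gt0.
have [m0 le_m0] := exp2_ge_linear (2 * K * l).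
set B := 2 * K * l * 2 ^ (c * (l * R)).
have [m1 le_m1] := exp2_ge_linear (B * (2 * l * h + 2 * l * R)).
exists (N1 + d * R + m0 + 2 * l * (h * m1 + R) + 1) => n le_n p Gs TGs bal.
have half i : n <= 2 * l * #|part p i| by apply: parts_half bal _; lia.
have unbalanced_rare : 2 * (k * h ^ k) * 2 ^ c <= 2 ^ h by move: le_h; lia.
have parts_large i : l * n < d * #|part p i| by have := half i; rewrite /d; nia.
have ramsey_small : d * R <= n by lia.
have K_small : 2 * K * l <= 2 ^ n.
  have le_m0n : m0 <= n by lia.
  by have := le_m0 n le_m0n; nia.
have packing_large i m : #|part p i| <= m * h + R -> B * n <= 2 ^ m.
  move=> le_part; have le_nm : n <= 2 * l * (m * h + R).
    by rewrite (leq_trans (half i)) // leq_mul2l le_part orbT.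
  have m1m : m1 <= m.
    rewrite leqNgt; apply/negP=> lt_m; move: le_nm.
    have : 2 * l * (m * h + R) <= 2 * l * (h * m1 + R).
      by rewrite (leq_mul2l (2 * l)) leq_add2r [m * h]mulnC leq_mul2l ltnW ?orbT.
    lia.
  apply: leq_trans (le_m1 m m1m); rewrite -mulnA leq_mul2l; apply/orP; right.
  by apply: leq_trans le_nm _; nia.
apply: (card_not_unique obstruction TGs l_gt0 h_gt0 unbalanced_rare (leqnn c) parts_large
  ramsey_small K_small) => i m /packing_large.
by rewrite mulnAC.
Qed.

Theorem lemma2p12 (T : graph_family) (hT : hereditary T) (mT : meager T)
  (l : nat) (hl : 0 < l) (eps : R) (heps : Rlt R0 eps) :
  forall eta : R, Rlt R0 eta ->
  exists n0 : nat, forall n : nat, n0 <= n ->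
  forall (p : {ffun 'I_n -> 'I_l}) (Gs : forall i : 'I_l, graph #|part p i|),
    (forall i, simple (Gs i)) ->
    (forall i, T _ (Gs i)) ->
    balanced eps p ->
    Rle (Rmult (Rminus R1 eta) (INR #|[set G : graph n | @extension n l p Gs G]|))
        (INR #|[set G : graph n | @extension n l p Gs G && unique_Fl_partition T G p]|).
Proof.
move=> eta eta_pos.
have [K K_eta] : exists K, Rle R1 (Rmult (INR K) eta).
  have [K ltK] := INR_unbounded (/ eta); exists K.
  have := Rmult_lt_compat_r eta _ _ eta_pos ltK; rewrite Rinv_l; lra.
have [n0 almost_all] := almost_all_unique_partition K hT mT hl heps.
exists n0 => n le_n0n p Gs _ TGs bal.
apply: (fraction_of_good _ (almost_all n le_n0n p Gs TGs bal) K_eta eta_pos).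
rewrite -(cardsID [set G | unique_Fl_partition T G p] (extensions p Gs)); congr (_ + _).
by apply: eq_card => G; rewrite !inE.
Qed.
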